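(* Let $h:(\mathbb R^2,0)\to(\mathbb R,0)$ be a $C^\infty$ function germ with $h=0$ on $\{(x,y):x\ge0\text{ and }y\le0\}$. Then there exists a $C^\infty$ function germ $\tilde h:(\mathbb R^2,0)\to(\mathbb R,0)$ such that $\tilde h=h$ on $\{x\ge0\}$ and $\tilde h=0$ on $\{y\le0\}$.
   Context: Equalities of germs on subsets are meant on the intersection of the subset with some neighbourhood of $0$. *)

From Stdlib Require Import Reals List.
From Coquelicot Require Import Coquelicot.
Open Scope R_scope.

Definition pdx (g : R -> R -> R) : R -> R -> R :=
  fun x y => Derive (fun t => g t y) x.
Definition pdy (g : R -> R -> R) : R -> R -> R :=
  fun x y => Derive (fun t => g x t) y.

Fixpoint iter_pd (ds : list bool) (g : R -> R -> R) : R -> R -> R :=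
  match ds with
  | nil => g
  | d :: ds' => if d then pdx (iter_pd ds' g) else pdy (iter_pd ds' g)
  end.

Definition near0 (r x y : R) : Prop := x * x + y * y < r * r.

(* A C^infinity germ at 0 is
   represented by any function that is C^infinity on a neighbourhood of 0. *)
Definition smooth_near0 (g : R -> R -> R) : Prop :=
  exists r, 0 < r /\
    forall (ds : list bool) (x y : R), near0 r x y ->
      ex_derive (fun t => iter_pd ds g t y) x /\
      ex_derive (fun t => iter_pd ds g x t) y /\
      continuous (fun p : R * R => iter_pd ds g (fst p) (snd p)) (x, y).

From Stdlib Require Import Reals Lra Lia Psatz List.
From Coquelicot Require Import Coquelicot.
Open Scope R_scope.

(* Take ht := h * chi with chi(x, y) := S((x + y) / (x^2 + y^2)), where S is the smooth step
   e(u) / (e(u) + e(1 - u)) built from e(t) = exp(-1/t).  Near 0, chi = 1 on {x >= 0, y > 0}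
   and chi = 0 on {x < 0, y <= 0}, while h = 0 on the rest of the two half-planes, so ht has
   the required values.  Away from 0, chi is smooth with derivatives O(|z|^(-2k)); h, which
   vanishes on a quadrant with vertex 0, is flat there: each of its derivatives is O(|z|^N)
   for every N (mean value theorem along the axes).  By Leibniz' rule every derivative of
   h * chi off 0 is then O(|z|^2), so h * chi is C^oo at 0 with all derivatives 0. *)

Lemma is_derive_0_of_sqr_bound (f : R -> R) (del C : R) : 0 < del ->
  (forall s, Rabs s < del -> Rabs (f s) <= C * s ^ 2) -> is_derive f 0 0.
Proof.
  intros Hdel Hb.
  assert (f0 : f 0 = 0).
  { assert (H := Hb 0 ltac:(rewrite Rabs_R0; lra)). simpl in H.
    apply Rabs_eq_0, Rle_antisym; [lra | apply Rabs_pos]. }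
  apply is_derive_Reals. intros eps Heps.
  set (C' := Rabs C + 1).
  assert (HC' : 0 < C') by (unfold C'; pose proof (Rabs_pos C); lra).
  assert (Hd : 0 < Rmin del (eps / C')) by (apply Rmin_pos; [lra | apply Rdiv_lt_0_compat; lra]).
  exists (mkposreal _ Hd). intros t Ht0 Ht. simpl in Ht.
  pose proof (Rmin_l del (eps / C')). pose proof (Rmin_r del (eps / C')).
  rewrite Rplus_0_l, f0, !Rminus_0_r.
  assert (Hat : 0 < Rabs t) by (apply Rabs_pos_lt; auto).
  assert (Hft : Rabs (f t) <= C' * (Rabs t * Rabs t)).
  { rewrite <- Rabs_mult, (Rabs_pos_eq (t * t)) by apply Rle_0_sqr.
    eapply Rle_trans; [apply Hb; lra |]. simpl. rewrite Rmult_1_r.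
    pose proof (Rle_abs C). apply Rmult_le_compat_r; [nra | unfold C'; lra]. }
  unfold Rdiv. rewrite Rabs_mult, Rabs_inv.
  apply (Rmult_lt_reg_r (Rabs t)); auto.
  rewrite Rmult_assoc, Rinv_l by lra.
  assert (C' * Rabs t < eps) by (apply (Rmult_lt_reg_l (/ C')); [apply Rinv_0_lt_compat; lra |];
    rewrite <- Rmult_assoc, Rinv_l, Rmult_1_l by lra; unfold Rdiv in *; lra).
  nra.
Qed.

Lemma is_derive_0_of_level_accum (f : R -> R) (x l : R) :
  (forall del, 0 < del -> exists t, t <> 0 /\ Rabs t < del /\ f (x + t) = f x) ->
  is_derive f x l -> l = 0.
Proof.
  intros Hacc Hd. apply is_derive_Reals in Hd.
  destruct (Req_dec l 0) as [|Hl]; auto. exfalso.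
  destruct (Hd (Rabs l) (Rabs_pos_lt l Hl)) as [[del Hdel] Hd'].
  destruct (Hacc del Hdel) as [t [Ht0 [Ht Hft]]].
  specialize (Hd' t Ht0 Ht). rewrite Hft, Rminus_diag in Hd'.
  unfold Rdiv in Hd'. rewrite Rmult_0_l, Rminus_0_l, Rabs_Ropp in Hd'. lra.
Qed.

Lemma Rabs_between_le (a b : R) : Rmin 0 b <= a <= Rmax 0 b -> Rabs a <= Rabs b.
Proof.
  unfold Rmin, Rmax. intros. destruct (Rle_dec 0 b);
  unfold Rabs; destruct (Rcase_abs a), (Rcase_abs b); lra.
Qed.

Lemma Rabs_sub_le_of_derive_bound (f f' : R -> R) (x B : R) :
  (forall c, Rabs c <= Rabs x -> is_derive f c (f' c) /\ Rabs (f' c) <= B) ->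
  Rabs (f x - f 0) <= B * Rabs x.
Proof.
  intros Hf.
  destruct (MVT_abs f f' 0 x) as [c [Hc Hcx]].
  - intros c Hc. apply is_derive_Reals, Hf, Rabs_between_le, Hc.
  - rewrite Hc, Rminus_0_r. apply Rmult_le_compat_r; [apply Rabs_pos |].
    apply Hf, Rabs_between_le, Hcx.
Qed.

Lemma Rabs_le_of_partial_bounds (g gx gy : R -> R -> R) (x y Bx By : R) :
  (forall c, Rabs c <= Rabs x -> is_derive (fun t => g t 0) c (gx c 0) /\ Rabs (gx c 0) <= Bx) ->
  (forall c, Rabs c <= Rabs y -> is_derive (fun t => g x t) c (gy x c) /\ Rabs (gy x c) <= By) ->
  Rabs (g x y) <= Rabs (g 0 0) + Bx * Rabs x + By * Rabs y.
Proof.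
  intros Hx Hy.
  pose proof (Rabs_sub_le_of_derive_bound (fun t => g t 0) (fun t => gx t 0) x Bx Hx).
  pose proof (Rabs_sub_le_of_derive_bound (fun t => g x t) (fun t => gy x t) y By Hy).
  replace (g x y) with ((g x y - g x 0) + (g x 0 - g 0 0) + g 0 0) by ring.
  pose proof (Rabs_triang (g x y - g x 0 + (g x 0 - g 0 0)) (g 0 0)).
  pose proof (Rabs_triang (g x y - g x 0) (g x 0 - g 0 0)). simpl in *. lra.
Qed.

Definition cauchy (k : nat) (t : R) : R :=
  if Rlt_dec 0 t then exp (- / t) * (/ t) ^ k else 0.

Lemma cauchy_ge0 k t : 0 <= cauchy k t.
Proof.
  unfold cauchy. destruct (Rlt_dec 0 t); [| lra].
  apply Rmult_le_pos; [left; apply exp_pos | apply pow_le; left; apply Rinv_0_lt_compat; auto].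
Qed.

Lemma pow_le_exp k u : 0 <= u -> u ^ k <= INR (S k) ^ k * exp u.
Proof.
  intros Hu.
  assert (HS : 0 < INR (S k)) by (apply lt_0_INR; lia).
  set (v := u / INR (S k)).
  assert (Hv : 0 <= v) by (unfold v; apply Rdiv_le_0_compat; lra).
  assert (Hkv : INR k * v <= u).
  { unfold v. rewrite S_INR in *. apply (Rmult_le_reg_r (INR k + 1)); [lra |].
    field_simplify; [| lra]. pose proof (pos_INR k). nra. }
  replace (u ^ k) with (INR (S k) ^ k * v ^ k)
    by (unfold v; rewrite <- Rpow_mult_distr; f_equal; field; lra).
  apply Rmult_le_compat_l; [apply pow_le; lra |].
  apply Rle_trans with (exp v ^ k).
  - apply pow_incr. split; [lra |]. pose proof (exp_ineq1_le v). lra.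
  - rewrite <- (Rpower_pow k (exp v)) by apply exp_pos.
    unfold Rpower. rewrite ln_exp.
    destruct (Req_dec (INR k * v) u) as [-> | Hne]; [lra | left; apply exp_increasing; lra].
Qed.

Lemma cauchy_le k t : cauchy k t <= INR (S k) ^ k.
Proof.
  unfold cauchy. destruct (Rlt_dec 0 t) as [Ht | _]; [| apply pow_le, pos_INR].
  pose proof (pow_le_exp k (/ t) (Rlt_le _ _ (Rinv_0_lt_compat _ Ht))) as H.
  rewrite exp_Ropp. apply (Rmult_le_reg_l (exp (/ t))); [apply exp_pos |].
  rewrite <- Rmult_assoc, Rinv_r by apply Rgt_not_eq, exp_pos. lra.
Qed.

Lemma cauchy_SS k t : cauchy k t = cauchy (S (S k)) t * t ^ 2.
Proof. unfold cauchy. destruct (Rlt_dec 0 t); [simpl; field; lra | ring]. Qed.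

Lemma is_derive_cauchy (k : nat) (t : R) :
  is_derive (cauchy k) t (cauchy (S (S k)) t - INR k * cauchy (S k) t).
Proof.
  destruct (Rlt_dec 0 t) as [Ht | Ht]; [| destruct (Rlt_dec t 0) as [Ht' | Ht']].
  - apply is_derive_ext_loc with (fun s => exp (- / s) * (/ s) ^ k).
    + apply (locally_interval _ t 0 p_infty Ht I). intros s Hs _. simpl in Hs.
      unfold cauchy. destruct (Rlt_dec 0 s); [reflexivity | lra].
    + unfold cauchy. destruct (Rlt_dec 0 t); [| lra].
      auto_derive; [lra |]. destruct k; [simpl; field; lra | rewrite S_INR; simpl; field; lra].
  - apply is_derive_ext_loc with (fun _ => 0).
    + apply (locally_interval _ t m_infty 0 I Ht'). intros s _ Hs. simpl in Hs.
      unfold cauchy. destruct (Rlt_dec 0 s); [lra | reflexivity].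
    + unfold cauchy. destruct (Rlt_dec 0 t); [lra |].
      replace (0 - INR k * 0) with 0 by ring. auto_derive; auto.
  - replace t with 0 by lra.
    unfold cauchy at 2 3. destruct (Rlt_dec 0 0); [lra |].
    replace (0 - INR k * 0) with 0 by ring.
    apply (is_derive_0_of_sqr_bound _ 1 (INR (S (S (S k))) ^ S (S k))); [lra |].
    intros s _. rewrite cauchy_SS, Rabs_pos_eq.
    + apply Rmult_le_compat_r; [apply pow2_ge_0 | apply cauchy_le].
    + apply Rmult_le_pos; [apply cauchy_ge0 | apply pow2_ge_0].
Qed.

Lemma continuity_pt_cauchy k t : continuity_pt (cauchy k) t.
Proof.
  apply derivable_continuous_pt. eexists. apply is_derive_Reals, is_derive_cauchy.
Qed.

Lemma cauchy0_ge_half t : / 2 <= t -> exp (-2) <= cauchy 0 t.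
Proof.
  intros Ht. unfold cauchy. destruct (Rlt_dec 0 t); [| lra]. rewrite pow_O, Rmult_1_r.
  assert (Hinv : / t <= 2)
    by (rewrite <- (Rinv_inv 2); apply Rinv_le_contravar; [apply Rinv_0_lt_compat |]; lra).
  destruct (Req_dec (/ t) 2) as [E | Hne]; [rewrite E; right; f_equal; lra | left; apply exp_increasing; lra].
Qed.

Definition sqnorm (x y : R) : R := x * x + y * y.

Lemma sqnorm_ge0 x y : 0 <= sqnorm x y.
Proof. unfold sqnorm. nra. Qed.

Lemma sqnorm_pos x y : sqnorm x y <> 0 -> 0 < sqnorm x y.
Proof. intros H. destruct (sqnorm_ge0 x y); [assumption | congruence]. Qed.

Lemma sqnorm_eq0 x y : sqnorm x y = 0 -> x = 0 /\ y = 0.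
Proof. unfold sqnorm. intros. split; nra. Qed.

Lemma sqnorm_sym x y : sqnorm y x = sqnorm x y.
Proof. unfold sqnorm. ring. Qed.

Lemma continuity_2d_pt_sqnorm x y : continuity_2d_pt sqnorm x y.
Proof.
  apply continuity_2d_pt_plus; apply continuity_2d_pt_mult;
    auto using continuity_2d_pt_id1, continuity_2d_pt_id2.
Qed.

Lemma locally_2d_near0 r x y : near0 r x y -> locally_2d (near0 r) x y.
Proof.
  unfold near0. intros H.
  assert (He : 0 < r * r - sqnorm x y) by (unfold sqnorm; lra).
  destruct (continuity_2d_pt_sqnorm x y (mkposreal _ He)) as [d Hd].
  exists d. intros u v Hu Hv. specialize (Hd u v Hu Hv). simpl in Hd.
  apply Rabs_def2 in Hd. unfold sqnorm in Hd. lra.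
Qed.

Lemma locally_2d_punctured r x y : sqnorm x y <> 0 -> near0 r x y ->
  locally_2d (fun u v => sqnorm u v <> 0 /\ near0 r u v) x y.
Proof.
  intros Hq Hr. apply locally_2d_and; [| apply locally_2d_near0, Hr].
  apply continuity_2d_pt_neq_0; [apply continuity_2d_pt_sqnorm | exact Hq].
Qed.

Lemma near0_le r r' x y : 0 <= r' -> r' <= r -> near0 r' x y -> near0 r x y.
Proof. unfold near0. intros. nra. Qed.

Lemma near0_Rabs r x y : 0 <= r -> near0 r x y -> Rabs x < r /\ Rabs y < r.
Proof.
  unfold near0. intros Hr H. rewrite <- (Rabs_pos_eq r Hr).
  split; apply Rsqr_lt_abs_0; unfold Rsqr; nra.
Qed.

Lemma near0_shrink r x y u v : near0 r x y -> Rabs u <= Rabs x -> Rabs v <= Rabs y ->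
  near0 r u v.
Proof.
  unfold near0. intros H Hu Hv. apply Rsqr_le_abs_1 in Hu, Hv. unfold Rsqr in *. lra.
Qed.

(* Functions smooth off 0 whose derivatives grow at most like a power of 1 / (x^2 + y^2)
   at 0 (tame_partial_x, tame_bound); generating the class inductively makes closure under
   partial derivatives provable by induction. *)
Inductive tame : (R -> R -> R) -> Prop :=
| tame_const c : tame (fun _ _ => c)
| tame_fst : tame (fun x _ => x)
| tame_snd : tame (fun _ y => y)
| tame_inv_sqnorm : tame (fun x y => / sqnorm x y)
| tame_cauchy k f : tame f -> tame (fun x y => cauchy k (f x y))
| tame_inv f c : tame f -> 0 < c -> (forall x y, c <= f x y) -> tame (fun x y => / f x y)
| tame_add f g : tame f -> tame g -> tame (fun x y => f x y + g x y)
| tame_mul f g : tame f -> tame g -> tame (fun x y => f x y * g x y)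
| tame_ext f g : tame f -> (forall x y, f x y = g x y) -> tame g.

Lemma tame_opp f : tame f -> tame (fun x y => - f x y).
Proof.
  intros Hf. apply tame_ext with (fun x y => -1 * f x y); [| intros; ring].
  apply tame_mul; [apply tame_const | exact Hf].
Qed.

Ltac tame_auto :=
  unfold Rminus, Rdiv;
  repeat first [ apply tame_const | apply tame_fst | apply tame_snd | apply tame_inv_sqnorm
               | apply tame_cauchy | apply tame_add | apply tame_mul | apply tame_opp ].

Lemma tame_continuity_2d_pt f : tame f ->
  forall x y, sqnorm x y <> 0 -> continuity_2d_pt f x y.
Proof.
  induction 1 as [c | | | | k f _ IH | f c _ IH Hc Hfc | f g _ IHf _ IHg | f g _ IHf _ IHg
                 | f g _ IH Hfg]; intros x y Hq.
  - apply continuity_2d_pt_const.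
  - apply continuity_2d_pt_id1.
  - apply continuity_2d_pt_id2.
  - apply continuity_2d_pt_inv; [apply continuity_2d_pt_sqnorm | exact Hq].
  - apply continuity_1d_2d_pt_comp; [apply continuity_pt_cauchy | auto].
  - apply continuity_2d_pt_inv; [auto | specialize (Hfc x y); lra].
  - apply continuity_2d_pt_plus; auto.
  - apply continuity_2d_pt_mult; auto.
  - apply continuity_2d_pt_ext with f; auto.
Qed.

Lemma tame_swap f : tame f -> tame (fun x y => f y x).
Proof.
  induction 1 as [c | | | | k f _ IH | f c _ IH Hc Hfc | f g _ IHf _ IHg | f g _ IHf _ IHg
                 | f g _ IH Hfg].
  - apply tame_const.
  - apply tame_snd.
  - apply tame_fst.
  - apply tame_ext with (fun x y => / sqnorm x y);
      [apply tame_inv_sqnorm | intros; rewrite sqnorm_sym; reflexivity].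
  - apply (tame_cauchy k (fun x y => f y x)), IH.
  - apply (tame_inv (fun x y => f y x) c); auto.
  - apply (tame_add (fun x y => f y x) (fun x y => g y x)); auto.
  - apply (tame_mul (fun x y => f y x) (fun x y => g y x)); auto.
  - apply tame_ext with (fun x y => f y x); auto.
Qed.

Lemma tame_partial_x f : tame f -> exists f', tame f' /\
  forall x y, sqnorm x y <> 0 -> is_derive (fun t => f t y) x (f' x y).
Proof.
  induction 1 as [c | | | | k f Hf [f' [Hf' Hd]] | f c Hf [f' [Hf' Hd]] Hc Hfc
                 | f g _ [f' [Hf' Hdf]] _ [g' [Hg' Hdg]] | f g Hf [f' [Hf' Hdf]] Hg [g' [Hg' Hdg]]
                 | f g _ [f' [Hf' Hd]] Hfg].
  - exists (fun _ _ => 0). split; [tame_auto |]. intros. auto_derive; auto.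
  - exists (fun _ _ => 1). split; [tame_auto |]. intros. auto_derive; auto.
  - exists (fun _ _ => 0). split; [tame_auto |]. intros. auto_derive; auto.
  - exists (fun x y => -2 * x * (/ sqnorm x y * / sqnorm x y)). split; [tame_auto |].
    intros x y Hq. unfold sqnorm in *. auto_derive; [exact Hq | field; exact Hq].
  - exists (fun x y => (cauchy (S (S k)) (f x y) - INR k * cauchy (S k) (f x y)) * f' x y).
    split; [tame_auto; auto |].
    intros x y Hq. rewrite (Rmult_comm _ (f' x y)).
    apply (is_derive_comp (cauchy k) (fun t => f t y)); [apply is_derive_cauchy | auto].
  - exists (fun x y => - f' x y * (/ f x y * / f x y)).
    split; [tame_auto; auto; apply tame_inv with c; auto |].
    intros x y Hq. assert (Hf0 : f x y <> 0) by (specialize (Hfc x y); lra).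
    replace (- f' x y * (/ f x y * / f x y)) with (- f' x y / (f x y) ^ 2) by (field; auto).
    apply (is_derive_inv (fun t => f t y)); auto.
  - exists (fun x y => f' x y + g' x y). split; [tame_auto; auto |].
    intros. apply (is_derive_plus (fun t => f t y) (fun t => g t y)); auto.
  - exists (fun x y => f' x y * g x y + f x y * g' x y). split; [tame_auto; auto |].
    intros. apply (is_derive_mult (fun t => f t y) (fun t => g t y)); auto.
    intros; apply Rmult_comm.
  - exists f'. split; auto. intros x y Hq.
    apply (is_derive_ext (fun t => f t y)); auto.
Qed.

Lemma tame_partial_y f : tame f -> exists f', tame f' /\
  forall x y, sqnorm x y <> 0 -> is_derive (fun t => f x t) y (f' x y).
Proof.
  intros Hf. destruct (tame_partial_x _ (tame_swap _ Hf)) as [f' [Hf' Hd]].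
  exists (fun x y => f' y x). split; [apply tame_swap, Hf' |].
  intros x y Hq. apply Hd. rewrite sqnorm_sym. exact Hq.
Qed.

Lemma tame_bound f : tame f -> exists k C, 0 <= C /\
  forall x y, 0 < sqnorm x y <= 1 -> Rabs (f x y) <= C * (/ sqnorm x y) ^ k.
Proof.
  assert (Hinv1 : forall x y, 0 < sqnorm x y <= 1 -> 1 <= / sqnorm x y).
  { intros x y Hq. rewrite <- Rinv_1. apply Rinv_le_contravar; lra. }
  assert (Hmono : forall x y k m, 0 < sqnorm x y <= 1 ->
            (/ sqnorm x y) ^ k <= (/ sqnorm x y) ^ (k + m)).
  { intros. apply Rle_pow; [apply Hinv1; auto | lia]. }
  induction 1 as [c | | | | k f _ _ | f c _ _ Hc Hfc | f g _ [k1 [C1 [HC1 H1]]] _ [k2 [C2 [HC2 H2]]]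
                 | f g _ [k1 [C1 [HC1 H1]]] _ [k2 [C2 [HC2 H2]]] | f g _ [k [C [HC H]]] Hfg].
  - exists 0%nat, (Rabs c). split; [apply Rabs_pos | intros; simpl; lra].
  - exists 0%nat, 1. split; [lra |]. intros x y [_ Hq]. simpl. rewrite Rmult_1_r.
    apply Rabs_le. unfold sqnorm in Hq. split; nra.
  - exists 0%nat, 1. split; [lra |]. intros x y [_ Hq]. simpl. rewrite Rmult_1_r.
    apply Rabs_le. unfold sqnorm in Hq. split; nra.
  - exists 1%nat, 1. split; [lra |]. intros x y [Hq _]. simpl.
    rewrite Rabs_pos_eq; [lra | left; apply Rinv_0_lt_compat; exact Hq].
  - exists 0%nat, (INR (S k) ^ k). split; [apply pow_le, pos_INR |]. intros. simpl.
    rewrite Rmult_1_r, Rabs_pos_eq by apply cauchy_ge0. apply cauchy_le.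
  - exists 0%nat, (/ c). split; [left; apply Rinv_0_lt_compat, Hc |]. intros x y _. simpl.
    specialize (Hfc x y). rewrite Rmult_1_r, Rabs_pos_eq by (left; apply Rinv_0_lt_compat; lra).
    apply Rinv_le_contravar; auto.
  - exists (k1 + k2)%nat, (C1 + C2). split; [lra |]. intros x y Hq.
    eapply Rle_trans; [apply Rabs_triang |]. rewrite Rmult_plus_distr_r.
    apply Rplus_le_compat.
    + eapply Rle_trans; [apply H1, Hq |]. apply Rmult_le_compat_l; auto.
    + eapply Rle_trans; [apply H2, Hq |]. apply Rmult_le_compat_l; auto.
      rewrite Nat.add_comm. auto.
  - exists (k1 + k2)%nat, (C1 * C2). split; [apply Rmult_le_pos; auto |]. intros x y Hq.
    rewrite Rabs_mult, pow_add.
    replace (C1 * C2 * ((/ sqnorm x y) ^ k1 * (/ sqnorm x y) ^ k2))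
      with ((C1 * (/ sqnorm x y) ^ k1) * (C2 * (/ sqnorm x y) ^ k2)) by ring.
    apply Rmult_le_compat; auto using Rabs_pos.
  - exists k, C. split; auto. intros x y Hq. rewrite <- Hfg. auto.
Qed.

Definition smooth_on_disc (g : R -> R -> R) (r : R) : Prop :=
  forall (ds : list bool) (x y : R), near0 r x y ->
    ex_derive (fun t => iter_pd ds g t y) x /\
    ex_derive (fun t => iter_pd ds g x t) y /\
    continuous (fun p : R * R => iter_pd ds g (fst p) (snd p)) (x, y).

Lemma smooth_on_disc_le g r r' : 0 <= r' -> r' <= r -> smooth_on_disc g r -> smooth_on_disc g r'.
Proof. intros Hr' Hle Hg ds x y Hn. apply Hg, (near0_le _ r'); auto. Qed.

Definition flat_at0 (g : R -> R -> R) : Prop :=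
  forall (N : nat) (ds : list bool), exists del C, 0 < del /\
    forall x y, near0 del x y -> Rabs (iter_pd ds g x y) <= C * sqnorm x y ^ N.

Section QuadrantFlat.

Variables (h : R -> R -> R) (r : R).
Hypothesis r_pos : 0 < r.
Hypothesis h_smooth : smooth_on_disc h r.
Hypothesis h_quadrant : forall x y, near0 r x y -> 0 <= x -> y <= 0 -> h x y = 0.

Lemma iter_pd_quadrant ds x y : near0 r x y -> 0 <= x -> y <= 0 -> iter_pd ds h x y = 0.
Proof.
  revert x y. induction ds as [| b ds IH]; intros x y Hn Hx Hy; [apply h_quadrant; auto |].
  destruct (locally_2d_near0 _ _ _ Hn) as [d Hd].
  destruct (h_smooth ds x y Hn) as [[lx Hlx] [[ly Hly] _]].
  (* Difference quotients taken towards the inside of the quadrant (rightwards for d/dx,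
     downwards for d/dy) vanish, so the derivative does. *)
  destruct b; simpl; [unfold pdx; transitivity lx; [apply is_derive_unique, Hlx |]
                     | unfold pdy; transitivity ly; [apply is_derive_unique, Hly |]].
  - apply (is_derive_0_of_level_accum (fun t => iter_pd ds h t y) x lx); [| exact Hlx].
    intros del Hdel. pose proof (Rmin_l del d). pose proof (Rmin_r del d).
    assert (Ht : 0 < Rmin del d / 2) by (pose proof (Rmin_pos del d Hdel (cond_pos d)); lra).
    exists (Rmin del d / 2). rewrite Rabs_pos_eq by lra. repeat split; try lra.
    rewrite !IH; auto; try lra.
    apply Hd; rewrite ?Rminus_diag, ?Rabs_R0; [rewrite Rabs_pos_eq |]; try lra; apply cond_pos.
  - apply (is_derive_0_of_level_accum (fun t => iter_pd ds h x t) y ly); [| exact Hly].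
    intros del Hdel. pose proof (Rmin_l del d). pose proof (Rmin_r del d).
    assert (Ht : 0 < Rmin del d / 2) by (pose proof (Rmin_pos del d Hdel (cond_pos d)); lra).
    exists (- (Rmin del d / 2)). rewrite Rabs_Ropp, Rabs_pos_eq by lra. repeat split; try lra.
    rewrite !IH; auto; try lra.
    apply Hd; rewrite ?Rminus_diag, ?Rabs_R0; [| rewrite Rabs_left]; try lra; apply cond_pos.
Qed.

Lemma iter_pd_flat_sum n ds : exists del C, 0 < del /\ 0 <= C /\
  forall x y, near0 del x y -> Rabs (iter_pd ds h x y) <= C * (Rabs x + Rabs y) ^ n.
Proof.
  assert (H00 : near0 r 0 0) by (unfold near0; nra).
  revert ds. induction n as [| n IH]; intros ds.
  - destruct (h_smooth ds 0 0 H00) as [_ [_ Hc]].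
    apply continuity_2d_pt_filterlim in Hc.
    destruct (Hc (mkposreal 1 Rlt_0_1)) as [d Hd]. simpl in Hd.
    exists d, 1. split; [apply cond_pos | split; [lra |]]. intros x y Hn.
    destruct (near0_Rabs d x y) as [Hx Hy]; [left; apply cond_pos | exact Hn |].
    specialize (Hd x y). rewrite (iter_pd_quadrant ds 0 0 H00 (Rle_refl 0) (Rle_refl 0)),
      !Rminus_0_r in Hd.
    rewrite pow_O, Rmult_1_r. left. apply Hd; assumption.
  - destruct (IH (true :: ds)) as [d1 [C1 [Hd1 [HC1 H1]]]].
    destruct (IH (false :: ds)) as [d2 [C2 [Hd2 [HC2 H2]]]].
    set (del := Rmin r (Rmin d1 d2)).
    assert (Hdel : 0 < del /\ del <= r /\ del <= d1 /\ del <= d2).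
    { unfold del. pose proof (Rmin_l r (Rmin d1 d2)). pose proof (Rmin_r r (Rmin d1 d2)).
      pose proof (Rmin_l d1 d2). pose proof (Rmin_r d1 d2).
      repeat split; try lra. repeat apply Rmin_pos; assumption. }
    exists del, (C1 + C2). split; [tauto | split; [lra |]]. intros x y Hn.
    set (L := Rabs x + Rabs y).
    assert (Hin : forall u v d, Rabs u <= Rabs x -> Rabs v <= Rabs y -> del <= d -> near0 d u v)
      by (intros; apply (near0_le _ del), (near0_shrink _ x y); auto; lra).
    assert (HS : forall u v, Rabs u <= Rabs x -> Rabs v <= Rabs y -> (Rabs u + Rabs v) ^ n <= L ^ n)
      by (intros; apply pow_incr; pose proof (Rabs_pos u); pose proof (Rabs_pos v); unfold L; lra).
    assert (H0y : Rabs 0 <= Rabs y) by (rewrite Rabs_R0; apply Rabs_pos).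
    eapply Rle_trans;
      [apply (Rabs_le_of_partial_bounds _ (iter_pd (true :: ds) h) (iter_pd (false :: ds) h)
                x y (C1 * L ^ n) (C2 * L ^ n)) |].
    + intros c Hc. split.
      * apply Derive_correct, (h_smooth ds c 0), Hin; auto; lra.
      * eapply Rle_trans; [apply H1, Hin; auto; lra |].
        apply Rmult_le_compat_l, HS; auto using Rle_refl.
    + intros c Hc. split.
      * apply Derive_correct, (h_smooth ds x c), Hin; auto using Rle_refl; lra.
      * eapply Rle_trans; [apply H2, Hin; auto using Rle_refl; lra |].
        apply Rmult_le_compat_l, HS; auto using Rle_refl.
    + rewrite (iter_pd_quadrant ds 0 0 H00 (Rle_refl 0) (Rle_refl 0)), Rabs_R0.
      assert (0 <= L ^ n) by (apply pow_le; unfold L; pose proof (Rabs_pos x);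
                              pose proof (Rabs_pos y); lra).
      assert (0 <= C1 * L ^ n * Rabs y) by (pose proof (Rabs_pos y); repeat apply Rmult_le_pos; auto).
      assert (0 <= C2 * L ^ n * Rabs x) by (pose proof (Rabs_pos x); repeat apply Rmult_le_pos; auto).
      replace ((C1 + C2) * L ^ S n)
        with (C1 * L ^ n * Rabs x + C2 * L ^ n * Rabs y + (C1 * L ^ n * Rabs y + C2 * L ^ n * Rabs x))
        by (unfold L; simpl; ring).
      lra.
Qed.

Lemma quadrant_flat_at0 : flat_at0 h.
Proof.
  intros N ds. destruct (iter_pd_flat_sum (2 * N) ds) as [del [C [Hdel [HC Hb]]]].
  exists del, (C * 2 ^ N). split; [exact Hdel |]. intros x y Hn.
  eapply Rle_trans; [apply Hb, Hn |].
  rewrite pow_mult, Rmult_assoc, <- Rpow_mult_distr.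
  apply Rmult_le_compat_l; [exact HC |]. apply pow_incr. split; [apply pow2_ge_0 |].
  assert (Esq : forall u, u * u = Rabs u * Rabs u)
    by (intros u; rewrite <- Rabs_mult; symmetry; apply Rabs_pos_eq, Rle_0_sqr).
  unfold sqnorm. rewrite (Esq x), (Esq y). simpl.
  pose proof (Rle_0_sqr (Rabs x - Rabs y)). unfold Rsqr in *. nra.
Qed.

End QuadrantFlat.

Lemma sqnorm_bound_at0 G del C : 0 < del ->
  (forall x y, near0 del x y -> Rabs (G x y) <= C * sqnorm x y) -> G 0 0 = 0.
Proof.
  intros Hdel Hb. assert (H := Hb 0 0 ltac:(unfold near0; nra)).
  unfold sqnorm in H. rewrite Rmult_0_l, Rplus_0_l, Rmult_0_r in H.
  apply Rabs_eq_0, Rle_antisym; [exact H | apply Rabs_pos].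
Qed.

Lemma near0_axes d s : Rabs s < d -> near0 d s 0 /\ near0 d 0 s.
Proof.
  intros Hs. assert (Hd : Rabs s < Rabs d) by (rewrite (Rabs_pos_eq d); pose proof (Rabs_pos s); lra).
  apply Rsqr_lt_abs_1 in Hd. unfold near0, Rsqr in *. split; lra.
Qed.

Lemma is_derive_partials_0_of_sqnorm_bound G del C : 0 < del ->
  (forall x y, near0 del x y -> Rabs (G x y) <= C * sqnorm x y) ->
  is_derive (fun t => G t 0) 0 0 /\ is_derive (fun t => G 0 t) 0 0.
Proof.
  intros Hdel Hb.
  split; apply (is_derive_0_of_sqr_bound _ del C Hdel); intros s Hs;
    destruct (near0_axes _ _ Hs) as [Hs0 H0s].
  - replace (s ^ 2) with (sqnorm s 0) by (unfold sqnorm; ring). apply Hb, Hs0.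
  - replace (s ^ 2) with (sqnorm 0 s) by (unfold sqnorm; ring). apply Hb, H0s.
Qed.

Lemma continuity_2d_pt_0_of_sqnorm_bound G del C : 0 < del ->
  (forall x y, near0 del x y -> Rabs (G x y) <= C * sqnorm x y) -> continuity_2d_pt G 0 0.
Proof.
  intros Hdel Hb eps. rewrite (sqnorm_bound_at0 G del C Hdel Hb).
  set (C' := Rabs C + 1).
  assert (HC' : 0 < C') by (unfold C'; pose proof (Rabs_pos C); lra).
  set (d := Rmin (del / 2) (Rmin 1 (eps / (2 * C')))).
  assert (Hd : 0 < d /\ d <= del / 2 /\ d <= 1 /\ d * (2 * C') <= eps).
  { pose proof (cond_pos eps). pose proof (Rmin_l (del / 2) (Rmin 1 (eps / (2 * C')))).
    pose proof (Rmin_r (del / 2) (Rmin 1 (eps / (2 * C')))).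
    pose proof (Rmin_l 1 (eps / (2 * C'))). pose proof (Rmin_r 1 (eps / (2 * C'))).
    fold d in H0, H1. repeat split; try lra.
    - unfold d. repeat apply Rmin_pos; try apply Rdiv_lt_0_compat; lra.
    - apply (Rmult_le_reg_r (/ (2 * C'))); [apply Rinv_0_lt_compat; lra |].
      rewrite Rmult_assoc, Rinv_r, Rmult_1_r by lra. lra. }
  exists (mkposreal d (proj1 Hd)). intros u v Hu Hv. simpl in Hu, Hv.
  rewrite Rminus_0_r in Hu, Hv |- *.
  assert (Hq : sqnorm u v <= Rabs u + Rabs v).
  { unfold sqnorm. rewrite <- (Rabs_pos_eq (u * u)), <- (Rabs_pos_eq (v * v)), !Rabs_mult
      by apply Rle_0_sqr.
    pose proof (Rabs_pos u). pose proof (Rabs_pos v). nra. }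
  eapply Rle_lt_trans; [apply Hb |].
  - apply (near0_shrink _ (del / 2) (del / 2)); [unfold near0; nra | |];
      rewrite (Rabs_pos_eq (del / 2)); lra.
  - pose proof (sqnorm_ge0 u v). pose proof (Rle_abs C).
    apply Rle_lt_trans with (C' * (Rabs u + Rabs v)).
    + apply Rle_trans with (C' * sqnorm u v); [apply Rmult_le_compat_r; unfold C'; lra |].
      apply Rmult_le_compat_l; lra.
    + apply Rlt_le_trans with (C' * (2 * d)); [apply Rmult_lt_compat_l; lra | lra].
Qed.

Lemma locally_2d_punctured_eq (G g : R -> R -> R) r x y :
  (forall u v, sqnorm u v <> 0 -> near0 r u v -> G u v = g u v) ->
  sqnorm x y <> 0 -> near0 r x y -> locally_2d (fun u v => g u v = G u v) x y.
Proof.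
  intros Heq Hq Hn. destruct (locally_2d_punctured r x y Hq Hn) as [d Hd].
  exists d. intros u v Hu Hv. destruct (Hd u v Hu Hv). symmetry. auto.
Qed.

Section FlatTimesTame.

Variables (h : R -> R -> R) (r : R).
Hypothesis r_pos : 0 < r.
Hypothesis h_smooth : smooth_on_disc h r.
Hypothesis h_flat : flat_at0 h.

(* Off 0, every iterated partial derivative of h * M (M tame) has this form. *)
Inductive flat_comb : (R -> R -> R) -> Prop :=
| flat_comb_term ds M : tame M -> flat_comb (fun x y => iter_pd ds h x y * M x y)
| flat_comb_add f g : flat_comb f -> flat_comb g -> flat_comb (fun x y => f x y + g x y).

Lemma flat_comb_continuity_2d_pt f : flat_comb f ->
  forall x y, sqnorm x y <> 0 -> near0 r x y -> continuity_2d_pt f x y.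
Proof.
  induction 1 as [ds M HM | f g _ IHf _ IHg]; intros x y Hq Hn.
  - apply continuity_2d_pt_mult; [| apply tame_continuity_2d_pt; auto].
    apply continuity_2d_pt_filterlim, (h_smooth ds x y Hn).
  - apply continuity_2d_pt_plus; auto.
Qed.

Lemma flat_comb_partial_x f : flat_comb f -> exists f', flat_comb f' /\
  forall x y, sqnorm x y <> 0 -> near0 r x y -> is_derive (fun t => f t y) x (f' x y).
Proof.
  induction 1 as [ds M HM | f g _ [f' [Hf' Hdf]] _ [g' [Hg' Hdg]]].
  - destruct (tame_partial_x M HM) as [M' [HM' HdM]].
    exists (fun x y => iter_pd (true :: ds) h x y * M x y + iter_pd ds h x y * M' x y).
    split; [apply flat_comb_add; apply flat_comb_term; auto |].
    intros x y Hq Hn. apply (is_derive_mult (fun t => iter_pd ds h t y) (fun t => M t y)).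
    + apply Derive_correct, (h_smooth ds x y Hn).
    + auto.
    + intros; apply Rmult_comm.
  - exists (fun x y => f' x y + g' x y). split; [apply flat_comb_add; auto |].
    intros. apply (is_derive_plus (fun t => f t y) (fun t => g t y)); auto.
Qed.

Lemma flat_comb_partial_y f : flat_comb f -> exists f', flat_comb f' /\
  forall x y, sqnorm x y <> 0 -> near0 r x y -> is_derive (fun t => f x t) y (f' x y).
Proof.
  induction 1 as [ds M HM | f g _ [f' [Hf' Hdf]] _ [g' [Hg' Hdg]]].
  - destruct (tame_partial_y M HM) as [M' [HM' HdM]].
    exists (fun x y => iter_pd (false :: ds) h x y * M x y + iter_pd ds h x y * M' x y).
    split; [apply flat_comb_add; apply flat_comb_term; auto |].
    intros x y Hq Hn. apply (is_derive_mult (fun t => iter_pd ds h x t) (fun t => M x t)).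
    + apply Derive_correct, (h_smooth ds x y Hn).
    + auto.
    + intros; apply Rmult_comm.
  - exists (fun x y => f' x y + g' x y). split; [apply flat_comb_add; auto |].
    intros. apply (is_derive_plus (fun t => f x t) (fun t => g x t)); auto.
Qed.

Lemma flat_comb_bound f : flat_comb f -> exists del C, 0 < del /\
  forall x y, near0 del x y -> sqnorm x y <> 0 -> Rabs (f x y) <= C * sqnorm x y.
Proof.
  induction 1 as [ds M HM | f g _ [d1 [C1 [Hd1 H1]]] _ [d2 [C2 [Hd2 H2]]]].
  - destruct (tame_bound M HM) as [k [CM [HCM HMb]]].
    destruct (h_flat (S k) ds) as [del [C [Hdel Hb]]].
    exists (Rmin del 1), (C * CM). split; [apply Rmin_pos; lra |]. intros x y Hn Hq.
    pose proof (Rmin_l del 1). pose proof (Rmin_r del 1).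
    assert (Hm : 0 < Rmin del 1) by (apply Rmin_pos; lra).
    assert (Hq1 : 0 < sqnorm x y <= 1).
    { split; [apply sqnorm_pos, Hq |]. unfold near0 in Hn. fold (sqnorm x y) in Hn. nra. }
    rewrite Rabs_mult.
    apply Rle_trans with ((C * sqnorm x y ^ S k) * (CM * (/ sqnorm x y) ^ k)).
    + apply Rmult_le_compat; try apply Rabs_pos; [apply Hb | apply HMb; exact Hq1].
      apply (near0_le _ (Rmin del 1)); auto; lra.
    + right. rewrite pow_inv. simpl. field. apply pow_nonzero. exact Hq.
  - exists (Rmin d1 d2), (C1 + C2). split; [apply Rmin_pos; lra |]. intros x y Hn Hq.
    pose proof (Rmin_l d1 d2). pose proof (Rmin_r d1 d2).
    assert (0 <= Rmin d1 d2) by (pose proof (Rmin_pos d1 d2 Hd1 Hd2); lra).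
    eapply Rle_trans; [apply Rabs_triang |]. rewrite Rmult_plus_distr_r.
    apply Rplus_le_compat; [apply H1 | apply H2]; auto; apply (near0_le _ (Rmin d1 d2)); auto.
Qed.

Definition comb_extension (G : R -> R -> R) : Prop :=
  exists g, flat_comb g /\
    (forall x y, sqnorm x y <> 0 -> near0 r x y -> G x y = g x y) /\ G 0 0 = 0.

Lemma comb_extension_bound G : comb_extension G -> exists del C, 0 < del /\
  forall x y, near0 del x y -> Rabs (G x y) <= C * sqnorm x y.
Proof.
  intros [g [Hg [Heq H0]]]. destruct (flat_comb_bound g Hg) as [del [C [Hdel Hb]]].
  exists (Rmin del r), C. split; [apply Rmin_pos; auto |]. intros x y Hn.
  pose proof (Rmin_l del r). pose proof (Rmin_r del r).
  assert (0 <= Rmin del r) by (pose proof (Rmin_pos del r Hdel r_pos); lra).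
  destruct (Req_dec (sqnorm x y) 0) as [Hq | Hq].
  - destruct (sqnorm_eq0 x y Hq) as [-> ->]. rewrite H0, Hq, Rabs_R0. lra.
  - rewrite Heq by (auto; apply (near0_le _ (Rmin del r)); auto).
    apply Hb; auto. apply (near0_le _ (Rmin del r)); auto.
Qed.

Lemma comb_extension_pdx G : comb_extension G -> comb_extension (pdx G).
Proof.
  intros HG. destruct (comb_extension_bound G HG) as [del [C [Hdel Hb]]].
  destruct HG as [g [Hg [Heq _]]]. destruct (flat_comb_partial_x g Hg) as [g' [Hg' Hd]].
  exists g'. split; [exact Hg' | split].
  - intros x y Hq Hn. unfold pdx. rewrite <- (is_derive_unique _ _ _ (Hd x y Hq Hn)).
    symmetry. apply Derive_ext_loc.
    apply (locally_2d_1d_const_y (fun u v => g u v = G u v)), (locally_2d_punctured_eq G g r); auto.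
  - apply is_derive_unique, (is_derive_partials_0_of_sqnorm_bound G del C Hdel Hb).
Qed.

Lemma comb_extension_pdy G : comb_extension G -> comb_extension (pdy G).
Proof.
  intros HG. destruct (comb_extension_bound G HG) as [del [C [Hdel Hb]]].
  destruct HG as [g [Hg [Heq _]]]. destruct (flat_comb_partial_y g Hg) as [g' [Hg' Hd]].
  exists g'. split; [exact Hg' | split].
  - intros x y Hq Hn. unfold pdy. rewrite <- (is_derive_unique _ _ _ (Hd x y Hq Hn)).
    symmetry. apply Derive_ext_loc.
    apply (locally_2d_1d_const_x (fun u v => g u v = G u v)), (locally_2d_punctured_eq G g r); auto.
  - apply is_derive_unique, (is_derive_partials_0_of_sqnorm_bound G del C Hdel Hb).
Qed.

Lemma comb_extension_iter_pd ds G : comb_extension G -> comb_extension (iter_pd ds G).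
Proof.
  intros HG. induction ds as [| [|] ds IH]; simpl;
    [exact HG | apply comb_extension_pdx, IH | apply comb_extension_pdy, IH].
Qed.

Lemma comb_extension_regular G : comb_extension G -> forall x y, near0 r x y ->
  ex_derive (fun t => G t y) x /\ ex_derive (fun t => G x t) y /\ continuity_2d_pt G x y.
Proof.
  intros HG x y Hn. destruct (comb_extension_bound G HG) as [del [C [Hdel Hb]]].
  destruct HG as [g [Hg [Heq H0]]].
  destruct (Req_dec (sqnorm x y) 0) as [Hq | Hq].
  - destruct (sqnorm_eq0 x y Hq) as [-> ->].
    destruct (is_derive_partials_0_of_sqnorm_bound G del C Hdel Hb) as [Hx Hy].
    split; [eexists; exact Hx | split; [eexists; exact Hy |]].
    apply (continuity_2d_pt_0_of_sqnorm_bound G del C Hdel Hb).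
  - pose proof (locally_2d_punctured_eq G g r x y Heq Hq Hn) as Hloc.
    destruct (flat_comb_partial_x g Hg) as [gx [_ Hdx]].
    destruct (flat_comb_partial_y g Hg) as [gy [_ Hdy]].
    split; [| split].
    + exists (gx x y). apply (is_derive_ext_loc (fun t => g t y)); auto.
      apply (locally_2d_1d_const_y (fun u v => g u v = G u v)), Hloc.
    + exists (gy x y). apply (is_derive_ext_loc (fun t => g x t)); auto.
      apply (locally_2d_1d_const_x (fun u v => g u v = G u v)), Hloc.
    + apply (continuity_2d_pt_ext_loc g); [exact Hloc |].
      apply flat_comb_continuity_2d_pt; auto.
Qed.

Lemma smooth_on_disc_comb_extension G : comb_extension G -> smooth_on_disc G r.
Proof.
  intros HG ds x y Hn.
  destruct (comb_extension_regular _ (comb_extension_iter_pd ds G HG) x y Hn) as [Hx [Hy Hc]].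
  split; [exact Hx | split; [exact Hy | apply continuity_2d_pt_filterlim, Hc]].
Qed.

Lemma flat_at0_iter_pd_0 ds : iter_pd ds h 0 0 = 0.
Proof.
  destruct (h_flat 1%nat ds) as [del [C [Hdel Hb]]].
  apply (sqnorm_bound_at0 _ del C Hdel). intros x y Hn. rewrite <- (pow_1 (sqnorm x y)). apply Hb, Hn.
Qed.

Theorem smooth_on_disc_flat_mul_tame M : tame M -> smooth_on_disc (fun x y => h x y * M x y) r.
Proof.
  intros HM. apply smooth_on_disc_comb_extension.
  exists (fun x y => iter_pd nil h x y * M x y). split; [apply flat_comb_term, HM |].
  split; [reflexivity |]. change (iter_pd nil h 0 0 * M 0 0 = 0).
  rewrite flat_at0_iter_pd_0. ring.
Qed.

End FlatTimesTame.

(* [inv_sum >= 1] exactly on the closed disc centred at (1/2, 1/2) through 0, and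
   [inv_sum < 0] where x + y < 0.  Its value at 0 is junk (a division by 0), harmless since
   it only ever multiplies h 0 0 = 0. *)
Definition inv_sum (x y : R) : R := (x + y) / sqnorm x y.

Definition cutoff (x y : R) : R :=
  cauchy 0 (inv_sum x y) / (cauchy 0 (inv_sum x y) + cauchy 0 (1 - inv_sum x y)).

Lemma cauchy0_step_denom_ge u : exp (-2) <= cauchy 0 u + cauchy 0 (1 - u).
Proof.
  pose proof (cauchy_ge0 0 u). pose proof (cauchy_ge0 0 (1 - u)).
  destruct (Rle_dec (/ 2) u).
  - pose proof (cauchy0_ge_half u). lra.
  - pose proof (cauchy0_ge_half (1 - u)). lra.
Qed.

Lemma tame_cutoff : tame cutoff.
Proof.
  assert (Hw : tame inv_sum) by (unfold inv_sum; tame_auto).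
  unfold cutoff, Rdiv. apply tame_mul; [tame_auto; exact Hw |].
  apply (tame_inv _ (exp (-2))); [tame_auto; exact Hw | apply exp_pos |].
  intros. apply cauchy0_step_denom_ge.
Qed.

Lemma cutoff_eq1 x y : near0 1 x y -> 0 <= x -> 0 < y -> cutoff x y = 1.
Proof.
  unfold near0. intros Hn Hx Hy.
  assert (Hq : 0 < sqnorm x y) by (unfold sqnorm; nra).
  assert (Hw : 1 <= inv_sum x y).
  { unfold inv_sum. apply (Rmult_le_reg_r (sqnorm x y)); [exact Hq |].
    unfold Rdiv. rewrite Rmult_assoc, Rinv_l, Rmult_1_l, Rmult_1_r by lra.
    unfold sqnorm. nra. }
  unfold cutoff. replace (cauchy 0 (1 - inv_sum x y)) with 0
    by (unfold cauchy; destruct (Rlt_dec 0 (1 - inv_sum x y)); [lra | reflexivity]).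
  rewrite Rplus_0_r. apply Rinv_r.
  pose proof (cauchy0_ge_half (inv_sum x y)). pose proof (exp_pos (-2)). lra.
Qed.

Lemma cutoff_eq0 x y : x < 0 -> y <= 0 -> cutoff x y = 0.
Proof.
  intros Hx Hy.
  assert (Hq : 0 < sqnorm x y) by (unfold sqnorm; nra).
  assert (Hw : inv_sum x y < 0).
  { unfold inv_sum, Rdiv. pose proof (Rinv_0_lt_compat _ Hq). nra. }
  unfold cutoff, cauchy at 1. destruct (Rlt_dec 0 (inv_sum x y)); [lra |]. unfold Rdiv. ring.
Qed.

Theorem lemma4p8 (h : R -> R -> R) :
  smooth_near0 h -> h 0 0 = 0 ->
  (exists e, 0 < e /\
     forall x y, near0 e x y -> 0 <= x -> y <= 0 -> h x y = 0) ->
  exists ht : R -> R -> R,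
    smooth_near0 ht /\ ht 0 0 = 0 /\
    exists d, 0 < d /\
      (forall x y, near0 d x y -> 0 <= x -> ht x y = h x y) /\
      (forall x y, near0 d x y -> y <= 0 -> ht x y = 0).
Proof.
  intros [rh [Hrh Hsmooth]] H00 [e [He Hquad]].
  set (r := Rmin e rh).
  assert (Hr : 0 < r /\ r <= e /\ r <= rh)
    by (unfold r; repeat split; [apply Rmin_pos | apply Rmin_l | apply Rmin_r]; auto).
  assert (Hs : smooth_on_disc h r) by (apply (smooth_on_disc_le _ rh); [lra | tauto | exact Hsmooth]).
  assert (Hq : forall x y, near0 r x y -> 0 <= x -> y <= 0 -> h x y = 0)
    by (intros; apply Hquad; auto; apply (near0_le _ r); auto; lra).
  exists (fun x y => h x y * cutoff x y). split; [| split].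
  - exists r. split; [tauto |].
    apply smooth_on_disc_flat_mul_tame; [tauto | exact Hs | | apply tame_cutoff].
    apply (quadrant_flat_at0 h r); tauto.
  - simpl. rewrite H00. ring.
  - set (d := Rmin r 1).
    assert (Hd : 0 < d /\ d <= r /\ d <= 1)
      by (unfold d; repeat split; [apply Rmin_pos | apply Rmin_l | apply Rmin_r]; lra).
    assert (Hdr : forall x y, near0 d x y -> near0 r x y /\ near0 1 x y)
      by (intros; split; apply (near0_le _ d); auto; lra).
    exists d. split; [tauto | split]; intros x y Hn Hxy; destruct (Hdr x y Hn) as [Hnr Hn1].
    + destruct (Rle_lt_dec y 0) as [Hy | Hy].
      * rewrite Hq; auto. ring.
      * rewrite cutoff_eq1; auto. ring.
    + destruct (Rle_lt_dec 0 x) as [Hx | Hx].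
      * rewrite Hq; auto. ring.
      * rewrite cutoff_eq0; auto. ring.
Qed.
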